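(* For every positive integer $n$, \[ \sum_{\pi \in \mathcal{D}(n)} (-1)^{\#(\pi)-1} s(\pi)^2 = 2\sigma(n) - d(n) + 2p^{(2)}(n). \]
   Context: $\mathcal{D}(n)$ is the set of partitions of $n$ into distinct parts; for a partition $\pi$, $s(\pi)$ is its smallest part and $\#(\pi)$ its number of parts. $\sigma(n)=\sum_{d\mid n} d$, $d(n)$ is the number of positive divisors of $n$, and $p^{(2)}(n)$ is the number of partitions of $n$ having exactly two distinct part sizes. *)

From mathcomp Require Import all_boot all_order all_algebra.
Set Implicit Arguments. Unset Strict Implicit. Unset Printing Implicit Defensive.
Import GRing.Theory Num.Theory.

(* A partition of n into distinct parts is encoded as its set of parts:
   A : {set 'I_n}, where the element i : 'I_n stands for the part i+1
   (every part of a partition of n lies in 1..n). *)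
Definition part (n : nat) (i : 'I_n) : nat := i.+1.

Definition is_distinct_partition (n : nat) (A : {set 'I_n}) : bool :=
  (\sum_(i in A) part i == n)%N.

Definition nparts (n : nat) (A : {set 'I_n}) : nat := #|A|.

Definition spart (n : nat) (A : {set 'I_n}) : nat :=
  \big[minn/n.+1]_(i in A) part i.

Definition sigma (n : nat) : nat := \sum_(d <- divisors n) d.
Definition ndiv (n : nat) : nat := size (divisors n).

(* A general partition of n is encoded by its multiplicity function:
   f i = number of times part i+1 occurs (at most n). *)
Definition is_partition (n : nat) (f : {ffun 'I_n -> 'I_n.+1}) : bool :=
  (\sum_(i : 'I_n) part i * f i == n)%N.

Definition nsizes (n : nat) (f : {ffun 'I_n -> 'I_n.+1}) : nat :=
  #|[set i | nat_of_ord (f i) != 0%N]|.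

Definition p2 (n : nat) : nat :=
  #|[set f : {ffun 'I_n -> 'I_n.+1} | is_partition f && (nsizes f == 2%N)]|.

From mathcomp Require Import all_boot all_order all_algebra.
From mathcomp Require Import ring zify.
Set Implicit Arguments.
Unset Strict Implicit.
Unset Printing Implicit Defensive.
Import GRing.Theory Num.Theory.
Local Open Scope ring_scope.

(* Grouping distinct partitions by their smallest part t, their signed generating
   function is h_t = X^t (1 - X^(t+1)) ... (1 - X^n), so the left-hand side is the
   coefficient of X^n in sum_t t^2 h_t.  Put S(Y) = sum_t h_t Y^t and
   Q(Y) = prod_(1 <= j <= n) (1 - X^j Y).  Modulo X^(n+1),
   S(X^(k+1) Y) = (1 - X^(k+1) Y) S(X^k Y) and S(X^n Y) = h_0 = Q(1), hence
   Q(Y) S(Y) = Q(1).  Differentiating twice at Y = 1 and cancelling the unit Q(1)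
   gives sum_t t^2 h_t = S'(1) + S''(1) = A + A^2 + B with A = sum_j X^j/(1 - X^j)
   and B = sum_j (X^j/(1 - X^j))^2.  Finally [X^n] A = d(n), [X^n] B = sigma(n) - d(n),
   and [X^n] A^2 counts the solutions of j a + k b = n: the diagonal j = k gives
   [X^n] B again, the rest twice the partitions with exactly two part sizes. *)

Definition eqmodr (R : comPzRingType) (m x y : R) := exists e, x - y = m * e.
Notation "x = y %[mod m ]" := (eqmodr m x y) : ring_scope.

Lemma mul_1subr_sumX (R : pzRingType) (x : R) N :
  (1 - x) * \sum_(i < N) x ^+ i = 1 - x ^+ N.
Proof. by rewrite -opprB mulNr -subrX1 opprB. Qed.

Section Congruence.
Variables (R : comPzRingType) (m : R).
Implicit Types x y u v : R.

Lemma eqmodr_refl x : x = x %[mod m].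
Proof. by exists 0; rewrite subrr mulr0. Qed.

Lemma eqmodr_eq x y : x = y -> x = y %[mod m].
Proof. by move->; apply: eqmodr_refl. Qed.

Lemma eqmodr_sym x y : x = y %[mod m] -> y = x %[mod m].
Proof. by case=> e E; exists (- e); rewrite mulrN -E opprB. Qed.

Lemma eqmodr_trans y x z : x = y %[mod m] -> y = z %[mod m] -> x = z %[mod m].
Proof. by case=> e E [f F]; exists (e + f); rewrite mulrDr -E -F addrA subrK. Qed.

Lemma eqmodrD x y u v :
  x = y %[mod m] -> u = v %[mod m] -> x + u = y + v %[mod m].
Proof. by case=> e E [f F]; exists (e + f); rewrite mulrDr -E -F; ring. Qed.

Lemma eqmodrN x y : x = y %[mod m] -> - x = - y %[mod m].
Proof. by case=> e E; exists (- e); rewrite mulrN -E; ring. Qed.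

Lemma eqmodrM x y u v :
  x = y %[mod m] -> u = v %[mod m] -> x * u = y * v %[mod m].
Proof.
case=> e E [f F]; exists (x * f + e * v).
have -> : x * u - y * v = x * (u - v) + (x - y) * v by ring.
by rewrite E F; ring.
Qed.

Lemma eqmodr_mul0 e : m * e = 0 %[mod m].
Proof. by exists e; rewrite subr0. Qed.

Lemma eqmodr_prod (I : Type) (r : seq I) (P : pred I) (F G : I -> R) :
  (forall i, P i -> F i = G i %[mod m]) ->
  \prod_(i <- r | P i) F i = \prod_(i <- r | P i) G i %[mod m].
Proof. by move=> FG; apply: big_ind2 => //; [apply: eqmodr_refl | apply: eqmodrM]. Qed.

Lemma eqmodr_cancel u v x y :
  u * v = 1 %[mod m] -> u * x = u * y %[mod m] -> x = y %[mod m].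
Proof.
move=> uv uxy; have vuxy := eqmodrM (eqmodr_refl v) uxy.
rewrite !mulrA ![v * u]mulrC in vuxy.
apply: eqmodr_trans (_ : _ = u * v * x %[mod m]) _.
  by rewrite -{1}[x]mul1r; apply: eqmodr_sym; apply: eqmodrM uv (eqmodr_refl x).
apply: eqmodr_trans vuxy _.
by rewrite -[y in _ = y %[mod m]]mul1r; apply: eqmodrM uv (eqmodr_refl y).
Qed.

Lemma eqmodr_geom x N :
  x ^+ N = 0 %[mod m] -> (1 - x) * \sum_(i < N) x ^+ i = 1 %[mod m].
Proof.
move=> xN0; rewrite mul_1subr_sumX.
apply: eqmodr_trans (eqmodrD (eqmodr_refl 1) (eqmodrN xN0)) _.
by apply: eqmodr_eq; rewrite oppr0 addr0.
Qed.

End Congruence.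

Arguments eqmodr_refl {R m} x.
Arguments eqmodr_eq {R m x y}.

Lemma eqmodr_rmorph (R S : comPzRingType) (f : {rmorphism R -> S}) m x y :
  x = y %[mod m] -> f x = f y %[mod f m].
Proof. by case=> e E; exists (f e); rewrite -rmorphB E rmorphM. Qed.

Section PolyCongruence.
Variable R : comNzRingType.
Implicit Types (p q : {poly R}) (u v : {poly {poly R}}).

Lemma eqmodr_coefXn k p q i : p = q %[mod 'X^k] -> (i < k)%N -> p`_i = q`_i.
Proof. by case=> e E ik; apply/eqP; rewrite -subr_eq0 -coefB E coefXnM ik. Qed.

Lemma eqmodr_derivC (c : R) p q : p = q %[mod c%:P] -> p^`() = q^`() %[mod c%:P].
Proof. by case=> e E; exists e^`(); rewrite -derivB E derivM derivC mul0r add0r. Qed.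

Lemma eqmodr_hornerC (c x : R) p q : p = q %[mod c%:P] -> p.[x] = q.[x] %[mod c].
Proof. by move/(eqmodr_rmorph (horner_eval x)); rewrite /= !horner_evalE hornerC. Qed.

End PolyCongruence.

Section LinearFactors.
Variable R : comNzRingType.

Lemma horner1_derivs_mul_linear (P : {poly R}) c (L := 1 - c%:P * 'X) :
  [/\ (P * L).[1] = P.[1] * (1 - c),
      (P * L)^`().[1] = P^`().[1] * (1 - c) - P.[1] * c &
      (P * L)^`()^`().[1] = P^`()^`().[1] * (1 - c) - 2%:R * c * P^`().[1]].
Proof.
have L1 : L.[1] = 1 - c by rewrite !hornerE.
have dL : L^`() = - c%:P by rewrite /L derivB derivC sub0r deriv_mulC derivX mulr1.
split; first by rewrite hornerM L1.
  by rewrite derivM dL hornerD !hornerM L1 hornerN hornerC mulrN.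
rewrite derivM dL derivD !derivM dL derivN derivC oppr0 mulr0 addr0.
by rewrite !hornerD !hornerM L1 !hornerN !hornerC; ring.
Qed.

Variables (m : R) (q e : nat -> R).
Hypothesis q_e : forall j, q j = (1 - q j) * e j %[mod m].

Local Notation Q k := (\prod_(j < k) (1 - (q j)%:P * 'X) : {poly R}).

Lemma prod_linear_derivs k :
  (Q k)^`().[1] = - (Q k).[1] * \sum_(j < k) e j %[mod m] /\
  (Q k)^`()^`().[1]
    = (Q k).[1] * ((\sum_(j < k) e j) ^+ 2 - \sum_(j < k) e j ^+ 2) %[mod m].
Proof.
elim: k => [|k [IH1 IH2]].
  by rewrite !big_ord0 derivC deriv0 !hornerC; split; apply: eqmodr_eq; ring.
rewrite !big_ord_recr /=.
have [-> -> ->] := horner1_derivs_mul_linear (Q k) (q k).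
set a := (Q k).[1]; set A := \sum_(j < k) e j; set A2 := \sum_(j < k) e j ^+ 2.
set c := q k; set E := e k.
split.
  apply: eqmodr_trans (_ : _ = (- a * A) * (1 - c) - a * ((1 - c) * E) %[mod m]) _.
    exact: eqmodrD (eqmodrM IH1 (eqmodr_refl _)) (eqmodrN (eqmodrM (eqmodr_refl a) (q_e k))).
  by apply: eqmodr_eq; ring.
apply: eqmodr_trans (_ : _ = (a * (A ^+ 2 - A2)) * (1 - c)
   - 2%:R * ((1 - c) * E) * (- a * A) %[mod m]) _.
  apply: eqmodrD (eqmodrM IH2 (eqmodr_refl _)) (eqmodrN (eqmodrM _ IH1)).
  exact: eqmodrM (eqmodr_refl _) (q_e k).
by apply: eqmodr_eq; ring.
Qed.

End LinearFactors.

Lemma eqmodr_derivs_cancel (R : comNzRingType) (m a1 a2 : R) (Q S : {poly R}) :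
  (exists v, Q.[1] * v = 1 %[mod m]) ->
  Q * S = (Q.[1])%:P %[mod m%:P] ->
  Q^`().[1] = - Q.[1] * a1 %[mod m] ->
  Q^`()^`().[1] = Q.[1] * (a1 ^+ 2 - a2) %[mod m] ->
  S^`().[1] + S^`()^`().[1] = a1 + a1 ^+ 2 + a2 %[mod m].
Proof.
move=> [v Qv] QS Q1 Q2.
have /(eqmodr_hornerC 1) E0 := QS.
have /eqmodr_derivC/(eqmodr_hornerC 1) E1 := QS.
have /eqmodr_derivC/eqmodr_derivC/(eqmodr_hornerC 1) E2 := QS.
move: E0 E1 E2; rewrite !derivM !derivD !derivM !derivC ?deriv0 !hornerD !hornerM ?horner0 !hornerC.
move: (Q.[1]) (Q^`().[1]) (Q^`()^`().[1]) (S.[1]) (S^`().[1]) (S^`()^`().[1]) Qv Q1 Q2.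
move=> a b g s0 s1 s2 Qv Q1 Q2 E0 E1 E2.
have s0e : s0 = 1 %[mod m] by apply: eqmodr_cancel Qv _; rewrite mulr1.
have s1e : s1 = a1 %[mod m].
  apply: eqmodr_cancel Qv _.
  apply: eqmodr_trans (_ : _ = (b * s0 + a * s1) - b * s0 %[mod m]) _.
    by apply: eqmodr_eq; ring.
  apply: eqmodr_trans (eqmodrD E1 (eqmodrN (eqmodrM Q1 s0e))) _.
  by apply: eqmodr_eq; ring.
have s2e : s2 = a1 ^+ 2 + a2 %[mod m].
  apply: eqmodr_cancel Qv _.
  apply: eqmodr_trans (_ : _ = (g * s0 + b * s1 + (b * s1 + a * s2))
      - g * s0 - 2%:R * b * s1 %[mod m]) _.
    by apply: eqmodr_eq; ring.
  apply: eqmodr_trans (eqmodrD (eqmodrD E2 (eqmodrN (eqmodrM Q2 s0e)))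
      (eqmodrN (eqmodrM (eqmodrM (eqmodr_refl _) Q1) s1e))) _.
  by apply: eqmodr_eq; ring.
apply: eqmodr_trans (eqmodrD s1e s2e) _.
by apply: eqmodr_eq; ring.
Qed.

Section MinPartGF.
Variable n : nat.
Local Notation P := {poly int}.

Definition tail_prod (t : nat) : P := \prod_(i : 'I_n | (t <= i)%N) (1 - 'X^(i.+1)).

Definition min_part_gf (t : nat) : P := 'X^t * tail_prod t.

(* S(X^k Y), the outer variable of {poly {poly int}} playing the role of Y *)
Definition shifted_gf (k : nat) : {poly P} :=
  \poly_(t < n.+1) (min_part_gf t * 'X^(k * t)).

Lemma tail_prod_n : tail_prod n = 1.
Proof. by apply: big_pred0 => i; rewrite leqNgt ltn_ord. Qed.

Lemma tail_prodS t : (t < n)%N -> tail_prod t = (1 - 'X^(t.+1)) * tail_prod t.+1.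
Proof.
move=> tn; rewrite /tail_prod (bigD1 (Ordinal tn)) //=; congr (_ * _).
by apply: eq_bigl => i; rewrite -val_eqE /=; lia.
Qed.

Lemma min_part_gfS t :
  (t < n)%N -> 'X * min_part_gf t = (1 - 'X^(t.+1)) * min_part_gf t.+1.
Proof. by move=> tn; rewrite /min_part_gf tail_prodS // exprS; ring. Qed.

Lemma shifted_gfS k : shifted_gf k.+1
  = (1 - ('X^(k.+1))%:P * 'X) * shifted_gf k + ('X^(k.+1 * n.+1))%:P * 'X^(n.+1).
Proof.
apply/polyP => i.
rewrite mulrBl mul1r -mulrA coefD coefB coefCM coefXM coefCM coefXn /shifted_gf !coef_poly.
case: i => [|i] /=; first by rewrite !muln0 !mulr0 subr0 addr0.
case: (ltngtP i n) => [lt|gt|->].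
- have -> : (i.+1 < n.+1)%N by lia.
  have -> : (i < n.+1)%N by lia.
  have -> : (i.+1 == n.+1) = false by lia.
  rewrite mulr0 addr0 exprS mulrA -(mulrA 'X) (mulrC 'X^k) mulrA min_part_gfS //.
  have -> : (k.+1 * i.+1 = i.+1 + k * i.+1)%N by lia.
  have -> : (k * i.+1 = k + k * i)%N by lia.
  by rewrite !exprD; ring.
- have -> : (i.+1 < n.+1)%N = false by lia.
  have -> : (i < n.+1)%N = false by lia.
  have -> : (i.+1 == n.+1) = false by lia.
  by rewrite !mulr0 !subr0 addr0.
- rewrite ltnn ltnSn eqxx mulr1 /min_part_gf tail_prod_n mulr1 sub0r -!exprD.
  have -> : (k.+1 + (n + k * n) = k.+1 * n.+1)%N by lia.
  by rewrite addNr.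
Qed.

Local Notation Q k := (\prod_(j < k) (1 - ('X^(j.+1))%:P * 'X) : {poly P}).

Lemma shifted_gf_eqmod k : Q k * shifted_gf 0 = shifted_gf k %[mod ('X^(n.+1))%:P].
Proof.
elim: k => [|k [e E]]; first by rewrite big_ord0 mul1r; apply: eqmodr_refl.
exists ((1 - ('X^(k.+1))%:P * 'X) * e - ('X^(k * n.+1))%:P * 'X^(n.+1)).
move/eqP: E; rewrite subr_eq => /eqP E.
rewrite shifted_gfS big_ord_recr /= [_ * (1 - _)]mulrC -mulrA E mulSn exprD polyCM.
ring.
Qed.

Lemma shifted_gf_n : shifted_gf n = (min_part_gf 0)%:P %[mod ('X^(n.+1))%:P].
Proof.
exists (\poly_(t < n.+1) (if t == 0%N then 0 else 'X^(t + n * t - n.+1) * tail_prod t)).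
apply/polyP => i; rewrite coefB coefCM coefC !coef_poly.
case: i => [|i] /=; first by rewrite muln0 expr0 mulr1 subrr mulr0.
rewrite subr0; case: ifP => _; last by rewrite mulr0.
rewrite /min_part_gf mulrAC -exprD mulrA -exprD; congr ('X^_ * _); lia.
Qed.

Lemma horner1_derivs_shifted_gf :
  (shifted_gf 0)^`().[1] + (shifted_gf 0)^`()^`().[1]
    = \sum_(t < n.+1) min_part_gf t *+ (t * t).
Proof.
rewrite /shifted_gf poly_def !raddf_sum /= !horner_sum -big_split /=.
apply: eq_bigr => t _.
rewrite mul0n expr0 mulr1 !derivZ derivXn derivMn derivXn !hornerZ !hornerMn !hornerXn !expr1n.
rewrite -[RHS]mulr_natr -mulrDr; congr (_ * _).
rewrite -[t.-1%:R *+ t]mulr_natr -natrM -natrD; congr (_%:R).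
by case: t => [[|t] ?] //=; lia.
Qed.

Definition multiples_gf (j : nat) : P := \sum_(a < n) 'X^(j * a.+1).

Lemma sum_sq_min_part_gf :
  \sum_(t < n.+1) min_part_gf t *+ (t * t)
    = \sum_(j < n) multiples_gf j.+1 + (\sum_(j < n) multiples_gf j.+1) ^+ 2
      + \sum_(j < n) multiples_gf j.+1 ^+ 2 %[mod 'X^(n.+1)].
Proof.
pose x j : P := 'X^(j.+1).
have x_nil j : x j ^+ n.+1 = 0 %[mod 'X^(n.+1)].
  by rewrite -exprM mulSn exprD; apply: eqmodr_mul0.
have x_geom j := eqmodr_geom (x_nil j).
have x_mult j : x j = (1 - x j) * multiples_gf j.+1 %[mod 'X^(n.+1)].
  have -> : multiples_gf j.+1 = x j * \sum_(a < n) x j ^+ a.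
    by rewrite mulr_sumr; apply: eq_bigr => a _; rewrite -exprS -exprM.
  rewrite mulrCA mul_1subr_sumX mulrBr mulr1 -exprS.
  have := eqmodrD (eqmodr_refl (x j)) (eqmodrN (x_nil j)).
  by rewrite oppr0 addr0 => /eqmodr_sym.
have Q1 : (Q n).[1] = \prod_(j < n) (1 - x j).
  by rewrite horner_prod; apply: eq_bigr => j _; rewrite !hornerE.
have Q1_gf : (Q n).[1] = min_part_gf 0.
  by rewrite Q1 /min_part_gf /tail_prod mul1r; apply: eq_bigl.
have [D1 D2] := prod_linear_derivs x_mult n.
rewrite -horner1_derivs_shifted_gf.
apply: eqmodr_derivs_cancel D1 D2.
  exists (\prod_(j < n) \sum_(a < n.+1) x j ^+ a); rewrite Q1 -big_split /=.
  apply: eqmodr_trans (_ : _ = \prod_(j < n) 1 %[mod 'X^(n.+1)]) _.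
    by apply: eqmodr_prod => j _; apply: x_geom.
  by rewrite big1_eq; apply: eqmodr_refl.
by rewrite Q1_gf; apply: eqmodr_trans (shifted_gf_eqmod n) shifted_gf_n.
Qed.

End MinPartGF.

Lemma prod_1subr_sum_subsets (R : comPzRingType) (I : finType) (P : pred I) (F : I -> R) :
  \prod_(i | P i) (1 - F i)
    = \sum_(J : {set I} | [forall i in J, P i]) (-1) ^+ #|J| * \prod_(i in J) F i.
Proof.
pose G i := if P i then - F i else 0.
transitivity (\prod_i (G i + 1)).
  by rewrite big_mkcond /=; apply: eq_bigr => i _; rewrite /G; case: (P i); rewrite ?add0r // addrC.
rewrite bigA_distr [RHS]big_mkcond /=; apply: eq_bigr => J _.
rewrite -big_mkcond /=; case: ifP => [/forallP PJ | /forallPn [i]].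
  by rewrite -prodrN; apply: eq_bigr => i iJ; rewrite /G (implyP (PJ i) iJ).
by rewrite negb_imply => /andP [iJ /negbTE Pi]; rewrite (bigD1 i) //= /G Pi mul0r.
Qed.

Lemma bigminn_le (I : eqType) (r : seq I) (P : pred I) (F : I -> nat) x i :
  i \in r -> P i -> (\big[minn/x]_(j <- r | P j) F j <= F i)%N.
Proof.
elim: r => // a r IH; rewrite in_cons big_cons => /orP [/eqP <- | ir] Pi.
  by rewrite Pi geq_minl.
by case: ifP => _; [apply: leq_trans (geq_minr _ _) (IH ir Pi) | apply: IH].
Qed.

Section MinPartCoef.
Variable n : nat.

Lemma coef_min_part_gf t : (min_part_gf n t)`_n
  = \sum_(J : {set 'I_n} | [forall i in J, t <= i]%N)
      (-1) ^+ #|J| * ((t + \sum_(i in J) i.+1)%N == n)%:R.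
Proof.
rewrite /min_part_gf /tail_prod prod_1subr_sum_subsets mulr_sumr coef_sum.
apply: eq_bigr => J _; rewrite prodrXr -(rmorph_sign (@polyC int)) /=.
by rewrite mulrCA coefCM -exprD coefXn eq_sym.
Qed.

Definition is_min (m : 'I_n) (A : {set 'I_n}) := (m \in A) && [forall i in A, m <= i]%N.

Lemma is_min_unique m m' A : is_min m A -> is_min m' A -> m = m'.
Proof.
case/andP => mA /forallP H /andP [m'A /forallP H'].
by apply: val_inj; apply/eqP; rewrite eqn_leq (implyP (H m') m'A) (implyP (H' m) mA).
Qed.

Lemma is_min_exists A : A != set0 -> exists m, is_min m A.
Proof.
case/set0Pn => i0 i0A; case: (arg_minnP (fun i : 'I_n => nat_of_ord i) i0A) => m mA Hm.
by exists m; apply/andP; split => //; apply/forallP => i; apply/implyP; apply: Hm.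
Qed.

Lemma is_min_setU1 m J :
  is_min m (m |: J) && ((m |: J) :\ m == J) = [forall i in J, m < i]%N.
Proof.
apply/andP/forallP => [[/andP [_ /forallP H] /eqP E] i | H].
  apply/implyP => iJ; have /(implyP (H i)) : i \in m |: J by rewrite setU1r.
  rewrite leq_eqVlt => /orP [/eqP /val_inj mi | //].
  by move: iJ; rewrite -mi -E setD11.
have mJ : m \notin J by apply/negP => /(implyP (H m)); rewrite ltnn.
split; last by rewrite setU1K.
rewrite /is_min setU11; apply/forallP => i; apply/implyP.
by rewrite in_setU1 => /orP [/eqP -> // | /(implyP (H i)) /ltnW].
Qed.

Lemma spart_is_min m A : is_min m A -> spart A = m.+1.
Proof.
case/andP => mA /forallP H; apply/eqP; rewrite eqn_leq; apply/andP; split.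
  exact: bigminn_le (mem_index_enum m) mA.
apply: (big_ind (fun x => m.+1 <= x)%N) => //.
- by rewrite ltnS ltnW.
- by move=> x y hx hy; rewrite leq_min hx hy.
- by move=> i iA; rewrite /part ltnS (implyP (H i) iA).
Qed.

Lemma sum_nonempty_by_min (R : nmodType) (F : {set 'I_n} -> R) :
  \sum_(A | A != set0) F A
    = \sum_(m : 'I_n) \sum_(J : {set 'I_n} | [forall i in J, m < i]%N) F (m |: J).
Proof.
transitivity (\sum_A \sum_(m : 'I_n) (if is_min m A then F A else 0)).
  rewrite big_mkcond; apply: eq_bigr => A _; case: ifP => [/is_min_exists [m0 min0] | /negbFE /eqP ->].
    rewrite (bigD1 m0) //= min0 big1 ?addr0 // => m; case: ifP => // minm.
    by rewrite (is_min_unique minm min0) eqxx.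
  by rewrite big1 // => m _; rewrite /is_min in_set0.
rewrite exchange_big; apply: eq_bigr => m _; rewrite -big_mkcond /=.
rewrite (reindex_onto (fun J => m |: J) (fun A => A :\ m)) /=; last first.
  by move=> A /andP [mA _]; rewrite setD1K.
by apply: eq_bigl => J; rewrite is_min_setU1.
Qed.

Lemma distinct_partition_neq0 (A : {set 'I_n}) : (0 < n)%N -> is_distinct_partition A -> A != set0.
Proof. by move=> n0; apply: contraTneq => ->; rewrite /is_distinct_partition big_set0 eq_sym -lt0n. Qed.

Lemma signed_sq_spart_sum : (0 < n)%N ->
  \sum_(A : {set 'I_n} | is_distinct_partition A) (-1) ^+ (nparts A).-1 * ((spart A) ^ 2)%:Z
    = (\sum_(t < n.+1) min_part_gf n t *+ (t * t))`_n.
Proof.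
move=> n0; rewrite coef_sum big_ord_recl mulr0n coef0 add0r.
rewrite (eq_bigl (fun A => (A != set0) && is_distinct_partition A)); last first.
  by move=> A; case: (boolP (is_distinct_partition A)) => [/(distinct_partition_neq0 n0) ->|]; rewrite ?andbF.
rewrite big_mkcondr sum_nonempty_by_min; apply: eq_bigr => m _.
rewrite coefMn coef_min_part_gf -sumrMnl [LHS]big_mkcond [RHS]big_mkcond /=.
apply: eq_bigr => J _; case minJ: [forall i in J, m < i]%N => //.
have /andP [/spart_is_min -> /eqP mJ] : is_min m (m |: J) && ((m |: J) :\ m == J).
  by rewrite is_min_setU1.
have mJ' : m \notin J by rewrite -mJ setD11.
rewrite /is_distinct_partition /nparts big_setU1 //= cardsU1 mJ' /=.
case: eqP => _; last by rewrite mulr0 mul0rn.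
by rewrite mulr1 -mulr_natr natz -mulnn.
Qed.

End MinPartCoef.

Local Open Scope nat_scope.

Section DivisorSums.
Variable n : nat.
Hypothesis n_gt0 : 0 < n.

Lemma sum_divisors_ord (F : nat -> nat) :
  \sum_(d <- divisors n) F d = \sum_(j < n) (if j.+1 %| n then F j.+1 else 0).
Proof.
have divisors_iota : perm_eq (divisors n) [seq d <- iota 1 n | d %| n].
  apply: uniq_perm; [exact: divisors_uniq | exact/filter_uniq/iota_uniq |].
  move=> d; rewrite mem_filter mem_iota -dvdn_divisors //.
  case dn: (d %| n) => //=; have := dvdn_leq n_gt0 dn; have := dvdn_gt0 n_gt0 dn; lia.
rewrite (perm_big _ divisors_iota) big_filter.
have -> : iota 1 n = index_iota 1 n.+1 by rewrite /index_iota subn1.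
by rewrite big_add1 big_mkord big_mkcond.
Qed.

Lemma sum_divisors_codiv : \sum_(d <- divisors n) n %/ d = sigma n.
Proof.
have codivK d : d %| n -> n %/ (n %/ d) = d.
  by move=> dn; rewrite divnA // mulKn.
have dvdn_codiv d : (d \in divisors n) -> (n %/ d \in divisors n).
  by rewrite -!dvdn_divisors // => /dvdn_div.
rewrite -(big_map (divn n) predT id) /sigma; apply/perm_big/uniq_perm.
- rewrite map_inj_in_uniq ?divisors_uniq // => d d' dD d'D E.
  by rewrite -(codivK d) ?dvdn_divisors // (E : n %/ d = n %/ d') codivK ?dvdn_divisors.
- exact: divisors_uniq.
move=> d; apply/mapP/idP => [[e eD ->] | dD]; first exact: dvdn_codiv.
by exists (n %/ d); [apply: dvdn_codiv | rewrite codivK // dvdn_divisors].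
Qed.

End DivisorSums.

Lemma sum_lt_ord N m : \sum_(a < N) (a < m) = minn m N.
Proof. by elim: N => [|N IH]; rewrite ?big_ord0 ?minn0 // big_ord_recr /= IH; lia. Qed.

Lemma sum_pairs_card2 (T : finType) (S : {set T}) :
  \sum_(j : T) \sum_(k : T | k != j) (S == [set j; k]) = 2 * (#|S| == 2).
Proof.
case: (boolP (#|S| == 2)) => [/eqP S2 | S2]; last first.
  rewrite muln0 big1 // => j _; rewrite big1 // => k kj.
  by case: eqP => // E; move: S2; rewrite E cards2 [j == k]eq_sym kj.
rewrite muln1 -S2 -sum1_card [RHS]big_mkcond; apply: eq_bigr => j _.
transitivity (\sum_(k | k != j) ((j \in S) && (k \in S) : nat)).
  apply: eq_bigr => k kj; congr nat_of_bool; apply/eqP/andP => [-> | [jS kS]].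
    by rewrite !inE !eqxx orbT.
  by apply/eqP; rewrite eq_sym eqEcard subUset !sub1set jS kS cards2 S2 eq_sym kj.
case jS: (j \in S); last by rewrite big1.
have : #|S :\ j| = 1 by have := cardsD1 j S; rewrite jS S2 add1n => -[].
rewrite -sum1_card => <-; rewrite [RHS]big_mkcond [LHS]big_mkcond.
by apply: eq_bigr => k _; rewrite !inE; case: (k != j); case: (k \in S).
Qed.

Section Counting.
Variable n : nat.

Definition nsol (j k : nat) : nat :=
  \sum_(a < n) \sum_(b < n) (j * a.+1 + k * b.+1 == n).

Lemma coef_multiples_gf j :
  ((multiples_gf n j)`_n = (\sum_(a < n) (j * a.+1 == n))%N%:R)%R.
Proof.
rewrite coef_sum natr_sum; apply: eq_bigr => a _.
by rewrite coefXn eq_sym.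
Qed.

Lemma coef_multiples_gfM j k :
  ((multiples_gf n j * multiples_gf n k)`_n = (nsol j k)%:R)%R.
Proof.
rewrite mulr_suml coef_sum natr_sum; apply: eq_bigr => a _.
rewrite mulr_sumr coef_sum natr_sum; apply: eq_bigr => b _.
by rewrite -exprD coefXn eq_sym.
Qed.

Lemma count_add_eq x q : \sum_(b < n) (x + b.+1 == q) = (x < q <= x + n).
Proof.
case: (boolP (x < q <= x + n)) => H.
  have lt : q - x - 1 < n by lia.
  rewrite (bigD1 (Ordinal lt)) //= big1 => [|b /eqP ne].
    by have -> : x + (q - x - 1).+1 == q by lia.
  by case: eqP => E //; case: ne; apply: val_inj => /=; lia.
by rewrite big1 // => b _; case: eqP => E //; have := ltn_ord b; move: H E; lia.
Qed.

Lemma count_mul_eq c x q : 0 < c -> q * c = n ->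
  \sum_(a < n) (c * x + c * a.+1 == n) = \sum_(a < n) (x + a.+1 == q).
Proof.
move=> c0 qc; have cq y : (c * y == n) = (y == q) by rewrite -qc mulnC eqn_pmul2r.
by apply: eq_bigr => a _; rewrite -mulnDr cq.
Qed.

Lemma count_dvd j : 0 < n -> \sum_(a < n) (j.+1 * a.+1 == n) = (j.+1 %| n).
Proof.
move=> n0; case: (boolP (j.+1 %| n)) => jn; last first.
  rewrite big1 // => a _; case: eqP => // E.
  by move: jn; rewrite -E dvdn_mulr.
have := count_mul_eq 0 (ltn0Sn j) (divnK jn); rewrite muln0 => ->.
by rewrite count_add_eq /= divn_gt0 // dvdn_leq // leq_div.
Qed.

Lemma ndiv_count : 0 < n -> \sum_(j < n) \sum_(a < n) (j.+1 * a.+1 == n) = ndiv n.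
Proof.
move=> n0; rewrite /ndiv -sum1_size sum_divisors_ord //.
by apply: eq_bigr => j _; rewrite count_dvd //; case: (j.+1 %| n).
Qed.

Lemma nsol_diag j : nsol j.+1 j.+1 = if j.+1 %| n then (n %/ j.+1).-1 else 0.
Proof.
rewrite /nsol; case: ifP => jn; last first.
  rewrite big1 // => a _; rewrite big1 // => b _.
  case: eqP => // E.
  by move: jn; rewrite -E -mulnDr dvdn_mulr.
have qn : n %/ j.+1 <= n by apply: leq_div.
transitivity (\sum_(a < n) (a < (n %/ j.+1).-1)); last first.
  by rewrite sum_lt_ord; apply/minn_idPl; lia.
apply: eq_bigr => a _.
by rewrite (count_mul_eq _ (ltn0Sn j) (divnK jn)) count_add_eq; lia.
Qed.

Lemma sum_nsol_diag : 0 < n -> \sum_(j < n) nsol j.+1 j.+1 + ndiv n = sigma n.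
Proof.
move=> n0; rewrite -sum_divisors_codiv // sum_divisors_ord // -ndiv_count //.
rewrite -big_split /=; apply: eq_bigr => j _; rewrite nsol_diag count_dvd //.
case: ifP => // jn; have : 0 < n %/ j.+1 by rewrite divn_gt0 // dvdn_leq.
lia.
Qed.

Definition used_parts (f : {ffun 'I_n -> 'I_n.+1}) : {set 'I_n} :=
  [set i | nat_of_ord (f i) != 0].

Section TwoPartSizes.
Variables (j k : 'I_n).
Hypothesis kj : k != j.

Definition two_size_partition (p : 'I_n * 'I_n) : {ffun 'I_n -> 'I_n.+1} :=
  [ffun i => if i == j then lift ord0 p.1 else if i == k then lift ord0 p.2 else ord0].

Lemma two_size_partition_inj : injective two_size_partition.
Proof.
move=> [a b] [a' b'] /ffunP E; have := E j; have := E k.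
by rewrite !ffunE eqxx (negbTE kj) eqxx /= => /lift_inj -> /lift_inj ->.
Qed.

Lemma used_two_size_partition p : used_parts (two_size_partition p) = [set j; k].
Proof.
by apply/setP => i; rewrite !inE ffunE; case: (i == j); case: (i == k).
Qed.

Lemma is_partition_two_size p :
  is_partition (two_size_partition p) = (j.+1 * p.1.+1 + k.+1 * p.2.+1 == n).
Proof.
rewrite /is_partition (bigD1 j) //= (bigD1 k) //= big1 => [|i /andP [ij ik]].
  by rewrite !ffunE eqxx (negbTE kj) eqxx addn0 /part mulnC [k.+1 * _]mulnC.
by rewrite ffunE (negbTE ij) (negbTE ik) muln0.
Qed.

Lemma card_two_size_partitions :
  #|[set f | is_partition f && (used_parts f == [set j; k])]| = nsol j.+1 k.+1.
Proof.
have -> : [set f | is_partition f && (used_parts f == [set j; k])]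
    = two_size_partition @: [set p : 'I_n * 'I_n | j.+1 * p.1.+1 + k.+1 * p.2.+1 == n].
  apply/setP => f; rewrite inE; apply/andP/imsetP => [[fP /eqP fU] | [p]].
    have used i : (nat_of_ord (f i) != 0) = (i \in [set j; k]) by rewrite -fU inE.
    have fj : ord0 != f j by rewrite eq_sym -val_eqE used !inE eqxx.
    have fk : ord0 != f k by rewrite eq_sym -val_eqE used !inE eqxx orbT.
    have [[a fa _] [b fb _]] := (unlift_some fj, unlift_some fk).
    have fE : f = two_size_partition (a, b).
      apply/ffunP => i; rewrite ffunE.
      case: eqP => [-> // | /eqP ij]; case: eqP => [-> // | /eqP ik].
      by apply/val_inj/eqP; rewrite /= -[_ == _]negbK used !inE negb_or ij ik.
    by exists (a, b) => //; rewrite inE -is_partition_two_size -fE.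
  by rewrite inE => pP ->; rewrite is_partition_two_size pP used_two_size_partition.
rewrite card_imset; last exact: two_size_partition_inj.
rewrite -sum1_card /nsol pair_big /= [LHS]big_mkcond /=.
by apply: eq_bigr => p _; rewrite inE; case: ifP.
Qed.

End TwoPartSizes.

Lemma card_set_sum (T : finType) (P : pred T) : #|[set x | P x]| = \sum_x P x.
Proof. by rewrite -sum1_card big_mkcond; apply: eq_bigr => x _; rewrite inE; case: (P x). Qed.

Lemma sum_nsol :
  \sum_(j < n) \sum_(k < n) nsol j.+1 k.+1 = \sum_(j < n) nsol j.+1 j.+1 + 2 * p2 n.
Proof.
have p2E : 2 * p2 n = \sum_(j < n) \sum_(k < n | k != j) nsol j.+1 k.+1.
  transitivity (\sum_f \sum_(j < n) \sum_(k < n | k != j)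
      (is_partition f && (used_parts f == [set j; k]) : nat)).
    rewrite /p2 card_set_sum big_distrr; apply: eq_bigr => f _.
    case: (is_partition f) => /=; first by rewrite sum_pairs_card2.
    by rewrite muln0 big1 // => j _; rewrite big1.
  rewrite exchange_big; apply: eq_bigr => j _; rewrite exchange_big.
  by apply: eq_bigr => k kj; rewrite -card_two_size_partitions // card_set_sum.
rewrite p2E -big_split; apply: eq_bigr => j _.
by rewrite (bigD1 j).
Qed.

End Counting.

Local Open Scope ring_scope.

Lemma coef_multiples_gf_sums n :
  (\sum_(j < n) multiples_gf n j.+1 + (\sum_(j < n) multiples_gf n j.+1) ^+ 2
     + \sum_(j < n) multiples_gf n j.+1 ^+ 2)`_n
  = (\sum_(j < n) \sum_(a < n) (j.+1 * a.+1 == n)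
     + \sum_(j < n) \sum_(k < n) nsol n j.+1 k.+1 + \sum_(j < n) nsol n j.+1 j.+1)%N%:R.
Proof.
rewrite !natrD !coefD expr2 mulr_suml !coef_sum !natr_sum.
congr (_ + _ + _); apply: eq_bigr => j _.
- exact: coef_multiples_gf.
- by rewrite mulr_sumr coef_sum natr_sum; apply: eq_bigr => k _; apply: coef_multiples_gfM.
- by rewrite expr2; apply: coef_multiples_gfM.
Qed.

Theorem mainTheorem7 (n : nat) (hn : (0 < n)%N) :
  \sum_(A : {set 'I_n} | is_distinct_partition A)
     (-1) ^+ (nparts A).-1 * ((spart A) ^ 2)%:Z
  = (2 * sigma n)%:Z - (ndiv n)%:Z + (2 * p2 n)%:Z.
Proof.
rewrite (signed_sq_spart_sum hn) (eqmodr_coefXn (sum_sq_min_part_gf n) (ltnSn n)).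
rewrite coef_multiples_gf_sums (ndiv_count hn) sum_nsol -(sum_nsol_diag hn).
lia.
Qed.
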